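(* Let $\mathcal{A}$ be a primal algebra with universe $A$, let $<$ be a linear order on $A$, and let $\sqsubset$ denote the induced antilexicographic orders. Let $n,m$ be positive integers, $\pi$ a permutation of $\{1,\dots,n\}$ and $\sigma$ a permutation of $\{1,\dots,m\}$. A map $f:A^n\to A^m$ is a homomorphism from $\mathcal{A}^n_{\sqsubseteq_\pi}$ to $\mathcal{A}^m_{\sqsubseteq_\sigma}$ if and only if there exist $i_1,\dots,i_m\in\{1,\dots,n\}$ such that $f(x_1,\dots,x_n)=(x_{i_1},\dots,x_{i_m})$ for all $x_1,\dots,x_n\in A$ and the numbers $j_s=\pi^{-1}(i_{\sigma(s)})$, $s\in\{1,\dots,m\}$, satisfy: (i) $j_m=n$; and (ii) for every $s<m$, if $j_s=k<n$ then $\{k+1,\dots,n\}\subseteq\{j_{s+1},\dots,j_m\}$.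
   Context: A primal algebra is a finite algebra with at least two elements in which every finitary operation on its universe is a term operation. For a linear order $<$ on $A$ and a positive integer $n$, the antilexicographic order $\sqsubset$ on $A^n$ is: $(x_1,\dots,x_n)\sqsubset(y_1,\dots,y_n)$ iff there is $s$ with $x_t=y_t$ for all $t>s$ and $x_s<y_s$. For a permutation $\pi$ of $\{1,\dots,n\}$, $(x_1,\dots,x_n)\sqsubset_\pi(y_1,\dots,y_n)$ iff $(x_{\pi(1)},\dots,x_{\pi(n)})\sqsubset(y_{\pi(1)},\dots,y_{\pi(n)})$; $\sqsubseteq$ and $\sqsubseteq_\pi$ are the reflexive versions. $\mathcal{A}^n_{\sqsubseteq_\pi}$ is the direct power algebra $\mathcal{A}^n$ expanded by the relation $\sqsubseteq_\pi$. A homomorphism from $\mathcal{A}^n_{\sqsubseteq_\pi}$ to $\mathcal{A}^m_{\sqsubseteq_\sigma}$ is a map $A^n\to A^m$ that is an algebra homomorphism $\mathcal{A}^n\to\mathcal{A}^m$ and satisfies $\bar x\sqsubseteq_\pi\bar y\Rightarrow f(\bar x)\sqsubseteq_\sigma f(\bar y)$. *)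

From mathcomp Require Import all_boot all_fingroup.
Set Implicit Arguments. Unset Strict Implicit. Unset Printing Implicit Defensive.

Record algebra (A : finType) := Algebra {
  op_sym : Type;
  arity : op_sym -> nat;
  op : forall o : op_sym, {ffun 'I_(arity o) -> A} -> A }.

Inductive term (A : finType) (alg : algebra A) (k : nat) : Type :=
| Var of 'I_k
| App (o : op_sym alg) of ('I_(arity o) -> term alg k).

Fixpoint eval_term (A : finType) (alg : algebra A) (k : nat)
  (t : term alg k) (x : {ffun 'I_k -> A}) : A :=
  match t with
  | Var i => x i
  | App o args => op [ffun j => eval_term (args j) x]
  end.

Definition is_term_op (A : finType) (alg : algebra A) (k : nat)
  (g : {ffun 'I_k -> A} -> A) : Prop :=
  exists t : term alg k, forall x, g x = eval_term t x.

Definition primal (A : finType) (alg : algebra A) : Prop :=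
  1 < #|A| /\ forall (k : nat) (g : {ffun 'I_k -> A} -> A), is_term_op alg g.

Definition strict_linear_order (A : finType) (lt : rel A) : Prop :=
  irreflexive lt /\ transitive lt /\ forall x y, x != y -> lt x y || lt y x.

Definition antilex (A : finType) (lt : rel A) (n : nat)
  (x y : {ffun 'I_n -> A}) : Prop :=
  exists s : 'I_n, (forall t : 'I_n, s < t -> x t = y t) /\ lt (x s) (y s).

Definition antilex_le_perm (A : finType) (lt : rel A) (n : nat) (pi : 'S_n)
  (x y : {ffun 'I_n -> A}) : Prop :=
  x = y \/ antilex lt [ffun t => x (pi t)] [ffun t => y (pi t)].

Definition power_hom (A : finType) (alg : algebra A) (n m : nat)
  (f : {ffun 'I_n -> A} -> {ffun 'I_m -> A}) : Prop :=
  forall (o : op_sym alg) (args : 'I_(arity o) -> {ffun 'I_n -> A}),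
    f [ffun t => op [ffun j => args j t]] =
    [ffun s => op [ffun j => f (args j) s]].

Definition ordered_power_hom (A : finType) (alg : algebra A) (lt : rel A)
  (n m : nat) (pi : 'S_n) (sigma : 'S_m)
  (f : {ffun 'I_n -> A} -> {ffun 'I_m -> A}) : Prop :=
  power_hom alg f /\
  forall x y, antilex_le_perm lt pi x y -> antilex_le_perm lt sigma (f x) (f y).

From mathcomp Require Import all_boot all_fingroup zify.

Set Implicit Arguments.
Unset Strict Implicit.
Unset Printing Implicit Defensive.

(* Since A is primal, each coordinate h of a homomorphism A^n -> A^m commutes
   with every finitary operation on A.  Apply h to the family of all points of
   A^n: its tuple F of values is either one of the n coordinate tuples, and h is
   that projection, or it is not, and then the operation that is b at F and a
   elsewhere commutes with h only if a = b.
   For a projection x |-> x o j, monotonicity of the antilexicographic orders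
   amounts to: every index above j s equals j t for some t > s.  Given this, j
   sends the last position where x o j and y o j differ to the last position
   where x and y differ.  If it fails at s and k, the vectors x and y that
   equal b only at j s and only at k satisfy x < y, while x o j and y o j
   differ at s without x o j being below y o j. *)

Definition proj_map (A : Type) (n m : nat) (j : 'I_m -> 'I_n)
  (x : {ffun 'I_n -> A}) : {ffun 'I_m -> A} := [ffun s => x (j s)].

Definition antilex_le (A : finType) (lt : rel A) (n : nat)
  (x y : {ffun 'I_n -> A}) : Prop := x = y \/ antilex lt x y.

Definition covers_above (n m : nat) (j : 'I_m -> 'I_n) : Prop :=
  forall (s : 'I_m) (k : 'I_n), j s < k -> exists2 t : 'I_m, s < t & j t = k.

Section ProjMap.

Variables (A : Type) (n m : nat).

Lemma proj_map_permK (pi : 'S_n) (x : {ffun 'I_n -> A}) :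
  proj_map pi (proj_map (pi^-1)%g x) = x.
Proof. by apply/ffunP => t; rewrite !ffunE permK. Qed.

Lemma proj_map_perm_inj (pi : 'S_n) : injective (@proj_map A n n pi).
Proof.
move=> x y /ffunP exy; apply/ffunP => u.
by have := exy ((pi^-1)%g u); rewrite !ffunE permKV.
Qed.

Lemma proj_map_conj (pi : 'S_n) (sigma : 'S_m) (i : 'I_m -> 'I_n)
  (x : {ffun 'I_n -> A}) :
  proj_map sigma (proj_map i x)
  = proj_map (fun s => (pi^-1)%g (i (sigma s))) (proj_map pi x).
Proof. by apply/ffunP => s; rewrite !ffunE permKV. Qed.

End ProjMap.

Section PrimalHomomorphisms.

Variables (A : finType) (alg : algebra A) (n m : nat).

Lemma power_hom_eval_term (f : {ffun 'I_n -> A} -> {ffun 'I_m -> A})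
  (hom : power_hom alg f) (k : nat) (t : term alg k)
  (args : 'I_k -> {ffun 'I_n -> A}) :
  f [ffun r => eval_term t [ffun l => args l r]]
  = [ffun s => eval_term t [ffun l => f (args l) s]].
Proof.
elim: t args => [l | o a IH] args /=.
  have -> : [ffun r => [ffun l' => args l' r] l] = args l.
    by apply/ffunP => r; rewrite !ffunE.
  by apply/ffunP => s; rewrite !ffunE.
pose args' l' := [ffun r => eval_term (a l') [ffun l => args l r]].
have -> : [ffun r => op [ffun l' => eval_term (a l') [ffun l => args l r]]]
          = [ffun r => op [ffun l' => args' l' r]].
  apply/ffunP => r; rewrite !ffunE; congr op.
  by apply/ffunP => l'; rewrite !ffunE.
rewrite hom; apply/ffunP => s; rewrite !ffunE; congr op; apply/ffunP => l'.
by rewrite !ffunE IH ffunE.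
Qed.

Lemma primal_power_hom_comm (prim : primal alg)
  (f : {ffun 'I_n -> A} -> {ffun 'I_m -> A}) (hom : power_hom alg f)
  (k : nat) (g : {ffun 'I_k -> A} -> A) (args : 'I_k -> {ffun 'I_n -> A}) :
  f [ffun r => g [ffun l => args l r]] = [ffun s => g [ffun l => f (args l) s]].
Proof.
have [t gt] := prim.2 k g.
have -> : [ffun r => g [ffun l => args l r]]
          = [ffun r => eval_term t [ffun l => args l r]].
  by apply/ffunP => r; rewrite !ffunE gt.
by rewrite power_hom_eval_term //; apply/ffunP => s; rewrite !ffunE gt.
Qed.

Lemma power_hom_proj_map (f : {ffun 'I_n -> A} -> {ffun 'I_m -> A})
  (i : 'I_m -> 'I_n) : f =1 proj_map i -> power_hom alg f.
Proof.
move=> fi o args; rewrite fi; apply/ffunP => s; rewrite !ffunE; congr op.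
by apply/ffunP => l; rewrite !ffunE fi ffunE.
Qed.

End PrimalHomomorphisms.

Lemma op_commuting_map_is_proj (A : finType) (n : nat)
  (h : {ffun 'I_n -> A} -> A) :
  1 < #|A| ->
  (forall k (g : {ffun 'I_k -> A} -> A) (args : 'I_k -> {ffun 'I_n -> A}),
     h [ffun r => g [ffun l => args l r]] = g [ffun l => h (args l)]) ->
  exists r : 'I_n, forall x, h x = x r.
Proof.
move=> /card_gt1P [a [b [_ _ neq_ab]]] comm.
pose args (l : 'I_#|{ffun 'I_n -> A}|) := enum_val l.
pose F := [ffun l => h (args l)].
pose row (r : 'I_n) := [ffun l => args l r].
have [r /eqP F_row | F_not_row] := pickP (fun r => F == row r).
  exists r => x; move/ffunP/(_ (enum_rank x)): F_row.
  by rewrite !ffunE /args enum_rankK.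
have := comm _ (fun z => if z == F then b else a) args.
rewrite -/F eqxx.
have -> : [ffun r => if [ffun l => args l r] == F then b else a]
          = [ffun r => a].
  apply/ffunP => r; rewrite !ffunE; case: eqP => // row_F.
  by have := F_not_row r; rewrite /row -row_F eqxx.
by rewrite (comm _ (fun _ => a) args) => eq_ab; rewrite eq_ab eqxx in neq_ab.
Qed.

Lemma primal_power_hom_proj (A : finType) (alg : algebra A) (n m : nat)
  (prim : primal alg) (f : {ffun 'I_n -> A} -> {ffun 'I_m -> A}) :
  power_hom alg f -> exists i : 'I_m -> 'I_n, f =1 proj_map i.
Proof.
move=> hom.
suff /fin_all_exists [i fi] : forall s, exists r : 'I_n, forall x, f x s = x r.
  by exists i => x; apply/ffunP => s; rewrite ffunE fi.
move=> s; apply: op_commuting_map_is_proj prim.1 _ => k g args.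
by rewrite (primal_power_hom_comm prim hom) ffunE.
Qed.

Section AntilexProjMap.

Variables (A : finType) (lt : rel A) (n m : nat).
Hypothesis lt_irr : irreflexive lt.

Lemma antilex_proj_map (j : 'I_m -> 'I_n) : covers_above j ->
  forall x y, antilex lt x y -> antilex_le lt (proj_map j x) (proj_map j y).
Proof.
move=> cov x y [p [eq_above lt_p]].
have neq_p : x p != y p by apply: contraTneq lt_p => ->; rewrite lt_irr.
have [s0 neq_s0 | eq_all] := pickP (fun s => x (j s) != y (j s)); last first.
  by left; apply/ffunP => s; rewrite !ffunE; apply/eqP/negbFE/eq_all.
right; have [s neq_s max_s] :=
  @arg_maxnP _ s0 (fun s => x (j s) != y (j s)) val neq_s0.
have js_p : j s = p.
  apply/val_inj/eqP; rewrite eqn_leq; apply/andP; split.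
    by rewrite leqNgt; apply: contra neq_s => /eq_above ->.
  rewrite leqNgt; apply/negP => /cov [t lt_st jt].
  by have := max_s t; rewrite jt => /(_ neq_p) /=; rewrite leqNgt lt_st.
exists s; split; last by rewrite !ffunE js_p.
move=> t lt_st; rewrite !ffunE; apply/eqP; apply: contraTT lt_st => neq_t.
by rewrite -leqNgt; exact: max_s t neq_t.
Qed.

Lemma covers_above_of_antilex_proj_map (a b : A) :
  lt a b -> ~~ lt b a -> forall j : 'I_m -> 'I_n,
  (forall x y, antilex lt x y -> antilex_le lt (proj_map j x) (proj_map j y)) ->
  covers_above j.
Proof.
move=> lt_ab nlt_ba j mono s k lt_jk.
have [t /andP [lt_st /eqP jt] | none] :=
  pickP (fun t : 'I_m => (s < t) && (j t == k)); first by exists t.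
have neq_ab : a != b by apply: contraTneq lt_ab => ->; rewrite lt_irr.
have neq_jk : j s != k by apply: contraTneq lt_jk => ->; rewrite ltnn.
pose x := [ffun u => if u == j s then b else a].
pose y := [ffun u => if u == k then b else a].
have lt_xy : antilex lt x y.
  exists k; split; last by rewrite !ffunE eqxx eq_sym (negbTE neq_jk).
  move=> u lt_ku; rewrite !ffunE.
  have neq_uk : u != k by apply: contraTneq lt_ku => ->; rewrite ltnn.
  have neq_us : u != j s by apply: contraTneq lt_ku => ->; rewrite ltnNge ltnW.
  by rewrite (negbTE neq_uk) (negbTE neq_us).
have [/ffunP/(_ s) | [s' [eq_above lt_s']]] := mono x y lt_xy.
  by rewrite !ffunE eqxx (negbTE neq_jk) => eq_ba; rewrite eq_ba eqxx in neq_ab.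
have js'_k : j s' = k.
  move: lt_s'; rewrite !ffunE; case: (j s' =P k) => // _.
  by case: (_ == _); rewrite ?lt_irr ?(negbTE nlt_ba).
have lt_s's : s' < s.
  have neq_s's : val s' != val s.
    by apply: contraNneq neq_jk => /val_inj <-; rewrite js'_k.
  rewrite ltn_neqAle neq_s's leqNgt /=; apply/negP => lt_ss'.
  by have := none s'; rewrite /= lt_ss' js'_k eqxx.
move: (eq_above s lt_s's).
by rewrite !ffunE eqxx (negbTE neq_jk) => eq_ba; rewrite eq_ba eqxx in neq_ab.
Qed.

End AntilexProjMap.

Lemma antilex_le_permE (A : finType) (lt : rel A) (n : nat) (pi : 'S_n)
  (x y : {ffun 'I_n -> A}) :
  antilex_le_perm lt pi x y <-> antilex_le lt (proj_map pi x) (proj_map pi y).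
Proof.
split=> [[-> | lt_xy] | [/proj_map_perm_inj -> | lt_xy]];
  by [left | right].
Qed.

Lemma antilex_proj_map_perm (A : finType) (lt : rel A) (n m : nat)
  (pi : 'S_n) (sigma : 'S_m) (i : 'I_m -> 'I_n) :
  (forall x y, antilex_le_perm lt pi x y ->
     antilex_le_perm lt sigma (proj_map i x) (proj_map i y)) <->
  (forall x y, antilex lt x y ->
     antilex_le lt (proj_map (fun s => (pi^-1)%g (i (sigma s))) x)
                   (proj_map (fun s => (pi^-1)%g (i (sigma s))) y)).
Proof.
split=> mono x y.
  move=> lt_xy.
  have : antilex_le_perm lt pi (proj_map (pi^-1)%g x) (proj_map (pi^-1)%g y).
    by apply/antilex_le_permE; rewrite !proj_map_permK; right.
  move/mono/antilex_le_permE.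
  by rewrite !(proj_map_conj pi sigma i) !proj_map_permK.
case=> [-> | lt_xy]; first by left.
by apply/antilex_le_permE; rewrite !(proj_map_conj pi sigma i); apply: mono.
Qed.

Lemma covers_aboveP (n m : nat) (j : 'I_m -> 'I_n) :
  covers_above j <->
  (forall s : 'I_m, val s = m.-1 -> val (j s) = n.-1) /\
  (forall s : 'I_m, val s < m.-1 -> val (j s) < n.-1 ->
     forall k : 'I_n, val (j s) < val k ->
       exists t : 'I_m, val s < val t /\ j t = k).
Proof.
split=> [cov | [last_last cov_below] s k lt_jk].
  split=> [s /= s_last | s _ _ k /cov [t lt_st jt]]; last by exists t.
  have lt_last : n.-1 < n by have := ltn_ord (j s); lia.
  have [lt_js | ge_js] := ltnP (j s) n.-1; last by have := ltn_ord (j s); lia.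
  by have [t lt_st _] := cov s (Ordinal lt_last) lt_js; have := ltn_ord t; lia.
have [s_below | s_last] := ltnP s m.-1.
  have lt_js : j s < n.-1 by have := ltn_ord k; lia.
  by have [t [lt_st jt]] := cov_below s s_below lt_js k lt_jk; exists t.
have s_eq : nat_of_ord s = m.-1 by have := ltn_ord s; lia.
by have /= := last_last s s_eq; have := ltn_ord k; lia.
Qed.

Lemma lt_asym_witness (A : finType) (lt : rel A) :
  1 < #|A| -> strict_linear_order lt -> exists a b, lt a b /\ ~~ lt b a.
Proof.
move=> /card_gt1P [a [b [_ _ neq_ab]]] [lt_irr [lt_trans lt_total]].
have asym x y : lt x y -> ~~ lt y x.
  by move=> lt_xy; apply/negP => /(lt_trans _ _ _ lt_xy); rewrite lt_irr.
by case/orP: (lt_total a b neq_ab) => [lt_ab | lt_ba];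
  [exists a, b | exists b, a]; split; rewrite // asym.
Qed.

(* Indices are 0-based: {1..n} is 'I_n, so "n" becomes n-1 and "m" becomes m-1. *)
Theorem lemma4p1 (A : finType) (alg : algebra A) (lt : rel A)
  (Hprimal : primal alg) (Hlt : strict_linear_order lt)
  (n m : nat) (Hn : 0 < n) (Hm : 0 < m) (pi : 'S_n) (sigma : 'S_m)
  (f : {ffun 'I_n -> A} -> {ffun 'I_m -> A}) :
  ordered_power_hom alg lt pi sigma f <->
  exists i : 'I_m -> 'I_n,
    (forall x, f x = [ffun s => x (i s)]) /\
    let j := fun s : 'I_m => (pi^-1)%g (i (sigma s)) in
    (forall s : 'I_m, val s = m.-1 -> val (j s) = n.-1) /\
    (forall s : 'I_m, val s < m.-1 -> val (j s) < n.-1 ->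
       forall k : 'I_n, val (j s) < val k ->
         exists t : 'I_m, val s < val t /\ j t = k).
Proof.
have [a [b [lt_ab nlt_ba]]] := lt_asym_witness Hprimal.1 Hlt.
have lt_irr : irreflexive lt := Hlt.1.
split.
  case=> hom mono; have [i fi] := primal_power_hom_proj Hprimal hom.
  exists i; split=> //; apply/covers_aboveP.
  apply: (covers_above_of_antilex_proj_map lt_irr lt_ab nlt_ba).
  by apply/antilex_proj_map_perm => x y; rewrite -!fi; apply: mono.
case=> i [fi /covers_aboveP cov]; split; first exact: power_hom_proj_map fi.
move=> x y; rewrite !fi; move: x y; apply/antilex_proj_map_perm.
exact: antilex_proj_map.
Qed.
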